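(* Let $p$ be an odd prime, $h(t)\in\Lambda_p$ irreducible with $\mathrm{br}\,h=n\ge1$, and $\mathbb X=(\mathbb F(p,h(t)),* )$. For $m\ge1$ let $p_m(t)=\sum_{j=0}^{m-1}t^j$ and $H_m(t)=1-t^m$. Then: (1) $\mathbb X$ is trivial (i.e. $a*b=a$ for all $a,b$) if and only if $h(t)\doteq t-1$. (2) If $\mathbb X$ is non-trivial, then $*^m=*^0$ (i.e. $t_{\mathbb X}$ divides $m$) if and only if $h(t)$ divides $p_m(t)$ in $\Lambda_p$. (3) $H_m(\bar t)=0$ in $\mathbb F(p,h(t))$ if and only if $m$ is a multiple of $t_{\mathbb X}$. (4) If $\mathbb X$ is non-trivial then $t_{\mathbb X}\ge n+1$; moreover $t_{\mathbb X}=n+1$ if and only if $p_{n+1}(t)$ is irreducible in $\mathbb Z_p[t]$ and $h(t)\doteq p_{n+1}(t)$ in $\Lambda_p$, in which case $p_{n+1}(t)$ is irreducible in $\mathbb Z[t]$ and $n+1$ is prime.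
   Context: A quandle is a set with operation $*$ satisfying $a*a=a$, $(a*b)*c=(a*c)*(b*c)$ and bijectivity of $x\mapsto x*b$; $a*^0b=a$, $a*^nb=(a*^{n-1}b)*b$; for a finite quandle the type $t_{\mathbb X}$ is the least $m\ge1$ with $*^m=*^0$. $\Lambda_p=\mathbb Z_p[t,t^{-1}]$; breadth $\mathrm{br}\,f$ = highest minus lowest exponent of nonzero monomials; $f\doteq g$ means $f=at^kg$, $a\in\mathbb Z_p^*$, $k\in\mathbb Z$. $\mathbb F(p,h(t))=\Lambda_p/(h(t))$ (a field with $p^n$ elements), $\bar t$ the class of $t$, and $a*b=\bar ta+(1-\bar t)b$. *)

From HB Require Import structures.
From mathcomp Require Import all_boot all_order all_algebra.
Set Implicit Arguments. Unset Strict Implicit. Unset Printing Implicit Defensive.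
Import Order.TTheory GRing.Theory Num.Theory.
Local Open Scope ring_scope.

Definition qpow (T : Type) (op : T -> T -> T) (n : nat) (a b : T) : T :=
  iter n (fun x => op x b) a.

Definition qtrivial (T : Type) (op : T -> T -> T) : Prop :=
  forall a b, op a b = a.

Definition qpow_id (T : Type) (op : T -> T -> T) (m : nat) : Prop :=
  forall a b, qpow op m a b = a.

Definition qtype (T : Type) (op : T -> T -> T) (m : nat) : Prop :=
  (1 <= m)%N /\ qpow_id op m /\ (forall k, (1 <= k < m)%N -> ~ qpow_id op k).

Definition alex_op (R : comNzRingType) (tb : R) (a b : R) : R :=
  tb * a + (1 - tb) * b.

(* Lambda_p = Z_p[t, t^-1], realised as the subring of the fraction     *)
(* field Z_p(t) of Laurent polynomials t^k g(t), g in Z_p[t].          *)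

Section Laurent.
Variable F : fieldType.

Notation FR := {fraction {poly F}}.

Definition tF : FR := tofrac ('X : {poly F}).

Definition lp (k : int) (g : {poly F}) : FR := tF ^ k * tofrac g.

Definition inL (x : FR) : Prop := exists (k : int) (g : {poly F}), x = lp k g.

Definition unitL (x : FR) : Prop := inL x /\ x != 0 /\ inL x^-1.

Definition dvdL (x y : FR) : Prop := exists c, inL c /\ y = x * c.

Definition irredL (x : FR) : Prop :=
  [/\ inL x, x != 0, ~ unitL x &
      forall a b, inL a -> inL b -> x = a * b -> unitL a \/ unitL b].

Definition assocL (f g : FR) : Prop :=
  exists (a : F) (k : int), a != 0 /\ f = tofrac (a%:P) * tF ^ k * g.

Definition lowexp (g : {poly F}) : nat := find (fun c => c != 0) g.

Definition breadth (g : {poly F}) : nat := ((size g).-1 - lowexp g)%N.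

Definition strip (g : {poly F}) : {poly F} := g %/ 'X^(lowexp g).
Definition qnorm (g : {poly F}) : {poly F} := (lead_coef (strip g))^-1 *: strip g.

End Laurent.

(* F(p, h) = Lambda_p/(h) for h = t^k g, realised as Z_p[t]/(q) with q the
   monic part of g prime to t (t is a unit of Lambda_p). *)
Definition Fph (p : nat) (g : {poly 'F_p}) : Type := {poly %/ qnorm g}.

Definition tbar (p : nat) (g : {poly 'F_p}) : Fph g := 'qX.

Definition pm (R : nzRingType) (m : nat) : {poly R} := \sum_(j < m) 'X^j.

Definition ring_irreducible (R : comUnitRingType) (x : R) : Prop :=
  [/\ x != 0, x \isn't a GRing.unit &
      forall a b : R, x = a * b -> a \is a GRing.unit \/ b \is a GRing.unit].

From HB Require Import structures.
From mathcomp Require Import all_boot all_order all_algebra.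
From mathcomp Require Import ring zify.
Set Implicit Arguments. Unset Strict Implicit. Unset Printing Implicit Defensive.
Import Order.TTheory GRing.Theory Num.Theory.
Local Open Scope ring_scope.

(* Write h = t^k g and let q be the monic part of g prime to t, so that
   F(p, h) = Z_p[t]/(q) and q is irreducible of degree n.  In the Alexander
   quandle a *^m b = t^m a + (1 - t^m) b, hence *^m = *^0 exactly when
   q | t^m - 1 = (t - 1) p_m(t).  The quandle is trivial iff q = t - 1;
   otherwise q is coprime to t - 1, so *^m = *^0 iff q | p_m.  Since t is a
   unit of the finite ring Z_p[t]/(q) it has a finite multiplicative order,
   which is the type.  As q | p_T, deg q = n <= T - 1, with equality iff
   q = p_{n+1}.  A monic integer polynomial that is irreducible mod p is
   irreducible over Z, and p_{ab} is divisible by p_a, so n + 1 is prime. *)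

Section Repunit.
Variable R : idomainType.

Lemma pmS m : pm R m.+1 = pm R m + 'X^m.
Proof. by rewrite /pm big_ord_recr. Qed.

Lemma size_pm m : size (pm R m) = m.
Proof.
elim: m => [|m IHm]; first by rewrite /pm big_ord0 size_poly0.
by rewrite pmS addrC size_polyDl size_polyXn ?IHm.
Qed.

Lemma pm_neq0 m : (0 < m)%N -> pm R m != 0.
Proof. by rewrite -size_poly_gt0 size_pm. Qed.

Lemma pm_monic m : (0 < m)%N -> pm R m \is monic.
Proof.
case: m => // m _; rewrite pmS addrC monicE lead_coefDl ?lead_coefXn //.
by rewrite size_polyXn size_pm.
Qed.

Lemma coef0_pm m : (0 < m)%N -> (pm R m)`_0 = 1.
Proof.
elim: m => // -[_ _ | m IHm _]; rewrite pmS coefD coefXn //=.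
by rewrite /pm big_ord0 coef0 add0r.
by rewrite IHm // addr0.
Qed.

Lemma Xn_sub1_pm m : 'X^m - 1 = ('X - 1) * pm R m.
Proof. exact: subrX1. Qed.

Lemma dvdp_pm a b : (a %| b)%N -> pm R a %| pm R b.
Proof.
case/dvdnP=> c ->; suff -> : pm R (c * a) = (\sum_(i < c) 'X^a ^+ i) * pm R a.
  exact: dvdp_mull.
apply: (@mulfI _ ('X - 1)); first by rewrite polyXsubC_eq0.
rewrite -Xn_sub1_pm mulrCA -Xn_sub1_pm mulrC -subrX1.
by rewrite mulnC exprM.
Qed.

Lemma prime_of_irreducible_pm N :
  (1 < N)%N -> irreducible_poly (pm R N) -> prime N.
Proof.
move=> N_gt1 irrN; have pdivN_prime := pdiv_prime N_gt1.
case: (eqVneq (pdiv N) N) => [<- // | pdivN_neqN].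
have size_pdiv : size (pm R (pdiv N)) != 1%N.
  by rewrite size_pm; apply: contraTneq pdivN_prime => ->.
have := apply_irredp irrN size_pdiv (dvdp_pm (pdiv_dvd N)).
by rewrite -dvdp_size_eqp ?dvdp_pm ?pdiv_dvd // !size_pm (negbTE pdivN_neqN).
Qed.

End Repunit.

Lemma map_pm (R S : nzRingType) (f : {rmorphism R -> S}) m :
  map_poly f (pm R m) = pm S m.
Proof.
by rewrite rmorph_sum; apply: eq_bigr => i _; rewrite rmorphXn /= map_polyX.
Qed.

(* Monic factors over Z have unit leading coefficients, so reduction
   preserves their degrees. *)
Lemma ring_irreducible_map_monic (F : idomainType) (f : {rmorphism int -> F})
    (P : {poly int}) :
  P \is monic -> irreducible_poly (map_poly f P) -> ring_irreducible P.
Proof.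
move=> P_monic irrPf; have size_Pf : size (map_poly f P) = size P.
  by rewrite size_map_poly_id0 // (monicP P_monic) rmorph1 oner_neq0.
have [size_Pf_gt1 _] := irrPf.
split; first exact: monic_neq0.
  by rewrite poly_unitE -size_Pf gtn_eqF.
have unit_of_size1 (a : {poly int}) :
    lead_coef a \is a GRing.unit -> size (map_poly f a) = 1%N ->
    a \is a GRing.unit.
  move=> ua; rewrite size_map_poly_id0 => [sa|]; last first.
    by apply: contraTneq (rmorph_unit f ua) => ->; rewrite unitr0.
  by move: ua; rewrite poly_unitE sa lead_coefE sa.
move=> a b Pab; have lead_ab : lead_coef a * lead_coef b = 1.
  by rewrite -lead_coefM -Pab (monicP P_monic).
have ua : lead_coef a \is a GRing.unit by apply/unitrPr; exists (lead_coef b).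
have ub : lead_coef b \is a GRing.unit.
  by apply/unitrPr; exists (lead_coef a); rewrite mulrC.
have Pf_ab : map_poly f P = map_poly f a * map_poly f b by rewrite Pab rmorphM.
have [af_neq0 bf_neq0] : map_poly f a != 0 /\ map_poly f b != 0.
  by apply/andP; rewrite -negb_or -mulf_eq0 -Pf_ab -size_poly_gt0 (ltnW size_Pf_gt1).
case: (eqVneq (size (map_poly f a)) 1%N) => [|size_af]; first by left; apply: unit_of_size1.
right; apply: unit_of_size1 => //.
have af_dvd : map_poly f a %| map_poly f P by rewrite Pf_ab dvdp_mulr.
have := apply_irredp irrPf size_af af_dvd.
rewrite -dvdp_size_eqp // Pf_ab size_mul // => /eqP.
by have := size_poly_gt0 (map_poly f b); rewrite bf_neq0; lia.
Qed.

Section Laurent.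
Variable F : fieldType.
Implicit Types (A B P s : {poly F}).

Lemma tF_neq0 : tF F != 0.
Proof. by rewrite tofrac_eq0 polyX_eq0. Qed.

Lemma tF_nat (m : nat) : tF F ^ (m : int) = tofrac ('X^m : {poly F}).
Proof. by rewrite tofracXn. Qed.

Lemma lp_mul a b A B : lp a A * lp b B = lp (a + b) (A * B).
Proof.
by rewrite /lp (expfzDr _ _ tF_neq0) tofracM -!mulrA [X in _ * X]mulrCA.
Qed.

Lemma lp0 A : lp 0 A = tofrac A.
Proof. by rewrite /lp expr0z mul1r. Qed.

Lemma lp_mulXn k A (m : nat) : lp k (A * 'X^m) = lp (k + m) A.
Proof.
by rewrite /lp tofracM -tF_nat (expfzDr _ _ tF_neq0) mulrAC mulrA.
Qed.

Lemma lp_eq e1 e2 A B : lp e1 A = lp e2 B ->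
  exists m : nat, B = 'X^m * A \/ A = 'X^m * B.
Proof.
have tofrac_eq e C : lp e A = tofrac C -> exists m : nat, C = 'X^m * A \/ A = 'X^m * C.
  case: e => m; rewrite /lp.
    by rewrite tF_nat -tofracM => /eqP; rewrite tofrac_eq => /eqP <-; exists m; left.
  move=> eAC; exists m.+1; right; apply/eqP.
  have tFm_neq0 : tF F ^+ m.+1 != 0 by rewrite expf_neq0 // tF_neq0.
  by rewrite -tofrac_eq tofracM tofracXn -eAC mulrA mulfV // mul1r.
move=> eAB; apply: (tofrac_eq (e1 - e2)).
by rewrite -lp0 -[B]mulr1 -(addrN e2) -lp_mul -eAB lp_mul mulr1.
Qed.

Lemma coef0_Xsub1 : ('X - 1 : {poly F})`_0 != 0.
Proof. by rewrite coefB coefX coefC sub0r oppr_eq0 oner_eq0. Qed.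

Lemma coprimep_Xn A m : A`_0 != 0 -> coprimep A 'X^m.
Proof. by move=> A0; apply: coprimep_expr; rewrite coprimepX /root horner_coef0. Qed.

Lemma size_unitL e A : unitL (lp e A) -> A`_0 != 0 -> size A = 1%N.
Proof.
move=> [_ [eA_neq0 [e' [B eB]]]] A0; apply/eqP.
have : lp e A * lp e' B = lp 0 1 by rewrite -eB mulfV // lp0 tofrac1.
rewrite lp_mul -dvdp1 => /lp_eq [m [-> | AB]]; first by rewrite mulrCA dvdp_mulIl.
by rewrite -(Gauss_dvdpr _ (coprimep_Xn m A0)) -AB dvdp_mulIl.
Qed.

Lemma dvdL_tofrac K s P : s`_0 != 0 -> dvdL (lp K s) (tofrac P) <-> s %| P.
Proof.
move=> s0; split.
  move=> [_ [[e [C ->]]]]; rewrite lp_mul -lp0 => /esym /lp_eq [m [-> | sC]].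
    by rewrite mulrCA dvdp_mulIl.
  by rewrite -(Gauss_dvdpr _ (coprimep_Xn m s0)) -sC dvdp_mulIl.
move=> /dvdpP [C ->]; exists (lp (- K) C); split; first by exists (- K), C.
by rewrite lp_mul addrN lp0 mulrC.
Qed.

Lemma assocL_tofrac K s P : s`_0 != 0 -> P`_0 != 0 ->
  assocL (lp K s) (tofrac P) <-> s %= P.
Proof.
move=> s0 P0; split=> [[a [k [a_neq0 eKs]]] | /eqpf_eq [c c_neq0 ->]]; last first.
  by exists c, K; split; rewrite // /lp -mul_polyC tofracM mulrCA mulrA.
have : lp K s = lp k (a *: P) by rewrite eKs /lp -mul_polyC tofracM mulrCA mulrA.
case/lp_eq=> -[|m] [] eq_sP; rewrite ?expr0 ?mul1r in eq_sP.
- by rewrite -eq_sP eqp_scale.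
- by rewrite eq_sP eqp_scale.
- move: (congr1 (coefp 0) eq_sP) => /= /eqP; rewrite coefXnM coefZ /=.
  by rewrite mulf_eq0 (negbTE a_neq0) (negbTE P0).
- by move: s0; rewrite eq_sP coefXnM /= eqxx.
Qed.

End Laurent.

Lemma strip_decomp (F : fieldType) (g : {poly F}) : g != 0 ->
  [/\ g = strip g * 'X^(lowexp g), (strip g)`_0 != 0 &
      size g = (lowexp g + size (strip g))%N].
Proof.
move=> g_neq0; set j := lowexp g.
have has_nz : has (fun c => c != 0) g.
  apply/hasP; exists (lead_coef g); last by rewrite lead_coef_eq0.
  by rewrite lead_coefE mem_nth // prednK // size_poly_gt0.
have eg : g = drop_poly j g * 'X^j.
  apply/polyP => i; rewrite coefMXn coef_drop_poly; case: ltnP => [ij | /subnK -> //].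
  by apply/eqP; have := before_find 0 ij; rewrite /= => /negPn.
have -> : strip g = drop_poly j g by rewrite /strip {1}eg mulpK // monic_neq0 ?monicXn.
have drop_neq0 : drop_poly j g != 0.
  by apply: contra_neq g_neq0 => d0; rewrite eg d0 mul0r.
split=> //; first by rewrite coef_drop_poly add0n; exact: (nth_find 0 has_nz).
by rewrite {1}eg size_mulXn.
Qed.

Lemma qpow_alex (R : comNzRingType) (tb : R) m a b :
  qpow (alex_op tb) m a b = tb ^+ m * a + (1 - tb ^+ m) * b.
Proof.
elim: m => [|m IHm] /=; first by rewrite expr0 mul1r subrr mul0r addr0.
by rewrite IHm /alex_op exprS; ring.
Qed.

Lemma qpow_id_alex (R : comNzRingType) (tb : R) m :
  qpow_id (alex_op tb) m <-> tb ^+ m = 1.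
Proof.
split=> [/(_ 1 0) | tbm a b]; first by rewrite qpow_alex mulr1 mulr0 addr0.
by rewrite qpow_alex tbm subrr mul0r addr0 mul1r.
Qed.

Lemma exists_exp_order (R : nzRingType) (x : R) m0 : (0 < m0)%N -> x ^+ m0 = 1 ->
  exists2 T, (0 < T)%N & forall m, (x ^+ m == 1) = (T %| m)%N.
Proof.
move=> m0_gt0 xm0; have exP : exists m, (0 < m)%N && (x ^+ m == 1).
  by exists m0; rewrite m0_gt0 xm0 eqxx.
case: (ex_minnP exP) => T /andP [T_gt0 /eqP xT] T_min; exists T => // m.
have xTm c : x ^+ (c * T)%N = 1 by rewrite mulnC exprM xT expr1n.
apply/eqP/idP => [xm | /dvdnP [c ->]]; last exact: xTm.
rewrite /dvdn; apply: contraT => r_neq0.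
have xr : x ^+ (m %% T)%N = 1 by rewrite -xm {2}(divn_eq m T) exprD xTm mul1r.
have := T_min (m %% T)%N; rewrite lt0n r_neq0 xr eqxx => /(_ isT).
by rewrite leqNgt ltn_pmod.
Qed.

Lemma pigeonhole_nat (T : finType) (f : nat -> T) :
  exists a b, (a < b)%N /\ f a = f b.
Proof.
have /injectivePn [x [y xy fxy]] : ~~ injectiveb (fun i : 'I_#|T|.+1 => f i).
  by apply/injectiveP => /leq_card; rewrite card_ord ltnn.
case: (ltngtP x y) => [lt_xy | lt_yx | /val_inj eq_xy]; last by rewrite eq_xy eqxx in xy.
- by exists x, y.
- by exists y, x.
Qed.

Section Quotient.
Variable F : fieldType.
Variable q : {poly F}.
Hypothesis q_monic : q \is monic.
Hypothesis size_q_gt1 : (1 < size q)%N.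

Lemma in_qpoly_eq0 P : (in_qpoly q P == 0) = (q %| P).
Proof.
have mk_q : mk_monic q = q by rewrite /mk_monic size_q_gt1 q_monic.
rewrite /dvdp (Pdiv.IdomainMonic.modpE q_monic); apply/eqP/eqP => [|P0].
  by move/(congr1 val); rewrite /= mk_q.
by apply: val_inj; rewrite /= mk_q.
Qed.

Lemma qX_expr_eq1 m : (('qX : {poly %/ q}) ^+ m == 1) = (q %| 'X^m - 1).
Proof. by rewrite -subr_eq0 -rmorphXn -(rmorph1 (in_qpoly q)) -rmorphB in_qpoly_eq0. Qed.

Lemma qX_unit : q`_0 != 0 -> ('qX : {poly %/ q}) \is a GRing.unit.
Proof.
move=> q0; rewrite unfold_in /= /mk_monic size_q_gt1 q_monic /=.
by rewrite -Pdiv.IdomainMonic.modpE // coprimep_modr -(expr1 'X) coprimep_Xn.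
Qed.

End Quotient.

Section AlexanderQuandle.
Variable F : finFieldType.
Variables (k : int) (g : {poly F}) (n : nat).
Hypothesis irr_h : irredL (lp k g).
Hypothesis breadth_g : breadth g = n.
Hypothesis n_gt0 : (0 < n)%N.

Local Notation q := (qnorm g).
Local Notation s := (strip g).
Local Notation tb := ('qX : {poly %/ q}).

Lemma g_neq0 : g != 0.
Proof.
case: irr_h => _ h_neq0 _ _.
by apply: contra_neq h_neq0 => ->; rewrite /lp tofrac0 mulr0.
Qed.

Lemma coef0_strip : s`_0 != 0.
Proof. by case: (strip_decomp g_neq0). Qed.

Lemma strip_neq0 : s != 0.
Proof. by apply: contra_neq coef0_strip => ->; rewrite coef0. Qed.

Lemma qnorm_strip : q = (lead_coef s)^-1 *: s.
Proof. by []. Qed.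

Lemma eqp_strip_qnorm : s %= q.
Proof. by rewrite qnorm_strip eqp_sym eqp_scale // invr_eq0 lead_coef_eq0 strip_neq0. Qed.

Lemma qnorm_monic : q \is monic.
Proof. by rewrite monicE qnorm_strip lead_coefZ mulVf // lead_coef_eq0 strip_neq0. Qed.

Lemma size_qnorm : size q = n.+1.
Proof.
rewrite -(eqp_size eqp_strip_qnorm) -{}breadth_g /breadth.
have [_ _ ->] := strip_decomp g_neq0; have := size_poly_gt0 s; rewrite strip_neq0.
by case: (size s) => // m _; rewrite addnS /= addKn.
Qed.

Lemma size_qnorm_gt1 : (1 < size q)%N.
Proof. by rewrite size_qnorm ltnS. Qed.

Lemma coef0_qnorm : q`_0 != 0.
Proof.
by rewrite qnorm_strip coefZ mulf_neq0 ?coef0_strip // invr_eq0 lead_coef_eq0 strip_neq0.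
Qed.

Lemma lp_strip : lp k g = lp (k + lowexp g) s.
Proof. by have [eg _ _] := strip_decomp g_neq0; rewrite [in LHS]eg lp_mulXn. Qed.

Lemma dvdL_qnorm (P : {poly F}) : dvdL (lp k g) (tofrac P) <-> q %| P.
Proof. by rewrite lp_strip dvdL_tofrac ?coef0_strip // (eqp_dvdl _ eqp_strip_qnorm). Qed.

Lemma assocL_qnorm (P : {poly F}) : P`_0 != 0 -> assocL (lp k g) (tofrac P) <-> q %= P.
Proof.
by move=> P0; rewrite lp_strip assocL_tofrac ?coef0_strip // (eqp_ltrans eqp_strip_qnorm).
Qed.

(* A factorisation q = d e gives h = t^K (c d) * e with c the leading
   coefficient of strip g, and units of Lambda with nonzero constant term
   are constants. *)
Lemma irreducible_qnorm : irreducible_poly q.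
Proof.
split=> [|d size_d /dvdpP [e qed]]; first exact: size_qnorm_gt1.
have [e0 d0] : e`_0 != 0 /\ d`_0 != 0.
  by apply/andP; rewrite -negb_or -mulf_eq0 -coef0M -qed coef0_qnorm.
have [e_neq0 d_neq0] : e != 0 /\ d != 0.
  by split; [apply: contra_neq e0 | apply: contra_neq d0] => ->; rewrite coef0.
have c_neq0 : lead_coef s != 0 by rewrite lead_coef_eq0 strip_neq0.
have h_de : lp k g = lp (k + lowexp g) (lead_coef s *: d) * lp 0 e.
  rewrite lp_strip lp_mul addr0 -scalerAl mulrC -qed qnorm_strip.
  by rewrite scalerA mulfV // scale1r.
have [_ _ _ /(_ _ _ (ex_intro _ _ (ex_intro _ _ erefl))
                   (ex_intro _ _ (ex_intro _ _ erefl)) h_de)] := irr_h.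
case=> [/size_unitL | /size_unitL /(_ e0) size_e].
  by rewrite coefZ mulf_neq0 // size_scale // => /(_ isT) /eqP; rewrite (negbTE size_d).
by rewrite -dvdp_size_eqp ?qed ?dvdp_mull // size_mul // size_e.
Qed.

Lemma qpow_id_qnorm m : qpow_id (alex_op tb) m <-> q %| 'X^m - 1.
Proof.
rewrite qpow_id_alex -(qX_expr_eq1 qnorm_monic size_qnorm_gt1).
by split=> [-> | /eqP].
Qed.

Lemma qtrivial_qnorm : qtrivial (alex_op tb) <-> q %= 'X - 1.
Proof.
change (qpow_id (alex_op tb) 1 <-> q %= 'X - 1).
rewrite qpow_id_qnorm expr1; split=> [q_dvd | /andP [] //].
have Xsub1_neq0 : 'X - 1 != 0 :> {poly F} by rewrite polyXsubC_eq0.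
rewrite -dvdp_size_eqp // size_XsubC size_qnorm eqSS eqn_leq n_gt0 andbT.
by have := dvdp_leq Xsub1_neq0 q_dvd; rewrite size_qnorm size_XsubC.
Qed.

(* Away from the trivial case q is coprime to t - 1, the other factor of t^m - 1. *)
Lemma dvdp_Xn_sub1_pm m :
  ~ qtrivial (alex_op tb) -> (q %| 'X^m - 1) = (q %| pm F m).
Proof.
move=> nontriv; rewrite Xn_sub1_pm Gauss_dvdpr //.
rewrite (irreducible_poly_coprime _ irreducible_qnorm).
by apply/negP => q_dvd; apply: nontriv; apply/(qpow_id_qnorm 1); rewrite expr1.
Qed.

Lemma exists_qX_order :
  exists2 T, (0 < T)%N & forall m, (tb ^+ m == 1) = (T %| m)%N.
Proof.
have [a [b [lt_ab tab]]] : exists a b, (a < b)%N /\ tb ^+ a = tb ^+ b.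
  exact: (pigeonhole_nat (fun i => tb ^+ i)).
have tb_unit := qX_unit qnorm_monic size_qnorm_gt1 coef0_qnorm.
have tb_ba : tb ^+ (b - a) = 1.
  by rewrite (exprB (ltnW lt_ab) tb_unit) tab divrr // unitrX.
have ba_gt0 : (0 < b - a)%N by rewrite subn_gt0.
exact: exists_exp_order ba_gt0 tb_ba.
Qed.

Section QuandleType.
Variable T : nat.
Hypothesis T_gt0 : (0 < T)%N.
Hypothesis qX_expr_eq1_T : forall m, (tb ^+ m == 1) = (T %| m)%N.

Lemma qtype_qX_order : qtype (alex_op tb) T.
Proof.
split=> //; split=> [|m /andP [m_gt0 lt_mT]]; rewrite qpow_id_alex.
  by apply/eqP; rewrite qX_expr_eq1_T.
by move/eqP; rewrite qX_expr_eq1_T => /(dvdn_leq m_gt0); rewrite leqNgt lt_mT.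
Qed.

Lemma subr_qX_eq0 m : 1 - tb ^+ m = 0 <-> (T %| m)%N.
Proof. by rewrite -qX_expr_eq1_T eq_sym -subr_eq0; split=> [-> | /eqP]. Qed.

Lemma dvdp_qnorm_pm m : ~ qtrivial (alex_op tb) -> (q %| pm F m) = (T %| m)%N.
Proof.
move=> nontriv; rewrite -dvdp_Xn_sub1_pm // -qX_expr_eq1_T.
by rewrite (qX_expr_eq1 qnorm_monic size_qnorm_gt1).
Qed.

Hypothesis nontriv : ~ qtrivial (alex_op tb).

Lemma type_lower_bound : (n.+1 <= T)%N.
Proof.
by rewrite -size_qnorm -(size_pm F T) dvdp_leq ?pm_neq0 // dvdp_qnorm_pm.
Qed.

Lemma type_eq_succn_iff :
  T = n.+1 <-> irreducible_poly (pm F n.+1) /\ (q %= pm F n.+1).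
Proof.
split=> [T_eq | [_ q_pm]].
  have q_pm : q = pm F n.+1.
    apply/eqP; rewrite -eqp_monic ?qnorm_monic ?pm_monic // -dvdp_size_eqp.
      by rewrite size_qnorm size_pm.
    by rewrite dvdp_qnorm_pm // T_eq.
  by rewrite -q_pm; split; [exact: irreducible_qnorm | exact: eqpxx].
apply/eqP; rewrite eqn_leq type_lower_bound andbT dvdn_leq //.
by rewrite -dvdp_qnorm_pm // (eqp_dvdl _ q_pm) dvdpp.
Qed.

End QuandleType.
End AlexanderQuandle.

Theorem lemma2p1 (p : nat) (k : int) (g : {poly 'F_p}) (n : nat) :
  prime p -> odd p ->
  irredL (lp k g) -> breadth g = n -> (1 <= n)%N ->
  let h := lp k g in
  let op := alex_op (tbar g) in
  (* (1) *)
  (qtrivial op <-> assocL h (tofrac ('X - 1))) /\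
  (* (2) *)
  (~ qtrivial op -> forall m, (1 <= m)%N -> (qpow_id op m <-> dvdL h (tofrac (pm _ m)))) /\
  (* the type t_X exists, and (3), (4) *)
  (exists T : nat, qtype op T /\
     (forall m, (1 <= m)%N -> (1 - tbar g ^+ m = 0 <-> (T %| m)%N)) /\
     (~ qtrivial op ->
        (n.+1 <= T)%N /\
        (T = n.+1 <-> irreducible_poly (pm 'F_p n.+1) /\ assocL h (tofrac (pm 'F_p n.+1))) /\
        (T = n.+1 -> ring_irreducible (pm int n.+1) /\ prime n.+1))).
Proof.
(* 'F_p is a field for every p. *)
move=> _ _ irr_h breadth_g n_gt0 h op.
have qpow_id_pm m : ~ qtrivial op -> qpow_id op m <-> dvdL h (tofrac (pm _ m)).
  move=> nontriv; rewrite dvdL_qnorm //.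
  rewrite -(dvdp_Xn_sub1_pm irr_h breadth_g n_gt0 m nontriv).
  exact: (qpow_id_qnorm irr_h breadth_g n_gt0 m).
split.
  apply: iff_trans (qtrivial_qnorm irr_h breadth_g n_gt0) _.
  by rewrite assocL_qnorm ?coef0_Xsub1.
split=> [nontriv m _ | ]; first exact: qpow_id_pm.
have [T T_gt0 qX_T] := exists_qX_order irr_h breadth_g n_gt0.
exists T; split; first exact: qtype_qX_order.
split=> [m _ | nontriv]; first exact: subr_qX_eq0.
have coef0_pmS : (pm 'F_p n.+1)`_0 != 0 by rewrite coef0_pm ?oner_eq0.
have T_min := type_eq_succn_iff irr_h breadth_g n_gt0 T_gt0 qX_T nontriv.
rewrite assocL_qnorm //; split.
  exact: (type_lower_bound irr_h breadth_g n_gt0 T_gt0 qX_T nontriv).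
split=> // /T_min [irr_pm _]; split; last exact: prime_of_irreducible_pm irr_pm.
have irr_map : irreducible_poly (map_poly (intr : {rmorphism int -> 'F_p}) (pm int n.+1)).
  by rewrite map_pm.
exact: ring_irreducible_map_monic (pm_monic _ (ltn0Sn n)) irr_map.
Qed.
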